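(* Let $f:X\to Y$ be a morphism of $\mathbf{OMLatGal}$. Then: (i) the image $\mathrm{Im}(f)=\ker(\mathrm{coker}(f))$ is the morphism $i_f:\downarrow(f_*(1)^\perp)\to Y$ with $(i_f)_*(v)=v^\perp$ and $(i_f)^*(y)=y^\perp\wedge f_*(1)^\perp$; (ii) the pair $e_f:X\to\downarrow(f_*(1)^\perp)$ with $(e_f)_*(x)=f_*(x)\wedge f_*(1)^\perp$ and $(e_f)^*(v)=f^*(v)$ is a morphism of $\mathbf{OMLatGal}$ satisfying $i_f\circ e_f=f$, and $e_f$ is zero-epic (its cokernel is zero); (iii) the pair $m_f:\downarrow(f^*(1)^\perp)\to\downarrow(f_*(1)^\perp)$ with $(m_f)_*(x)=f_*(x)\wedge f_*(1)^\perp$ and $(m_f)^*(v)=f^*(v)\wedge f^*(1)^\perp$ is a morphism that is both zero-epic and zero-monic, and $m_f\circ(i_{f^\dagger})^\dagger=e_f$, so that $f=i_f\circ m_f\circ(i_{f^\dagger})^\dagger$.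
   Context: An orthomodular lattice is a bounded lattice with an order-reversing involution $x\mapsto x^\perp$ such that $x\wedge x^\perp=0$, $x\vee x^\perp=1$, and $x\le y$ implies $y=x\vee(x^\perp\wedge y)$. The category $\mathbf{OMLatGal}$ has orthomodular lattices as objects; a morphism $f:X\to Y$ is a pair $(f_*,f^* )$ of order-reversing functions $f_*:X\to Y$, $f^*:Y\to X$ such that $y\le f_*(x)$ iff $x\le f^*(y)$ for all $x\in X,y\in Y$. The identity on $X$ is the pair whose both components are $x\mapsto x^\perp$. Composition of $f:X\to Y$ and $g:Y\to Z$ is $(g\circ f)_*=g_*\circ(-)^\perp\circ f_*$, $(g\circ f)^*=f^*\circ(-)^\perp\circ g^*$. The dagger is $(f_*,f^* )^\dagger=(f^*,f_* )$. It is a dagger kernel category whose zero object is the one-element lattice and where the dagger kernel of $f:X\to Y$ is the downset morphism $\downarrow f^*(1)\to X$; for $a\in X$, $\downarrow a=\{u\le a\}$ carries the order of $X$ and complement $u^{\perp_a}=a\wedge u^\perp$, and the downset morphism $a:\downarrow a\to X$ has $a_*(u)=u^\perp$, $a^*(x)=a\wedge x^\perp$. The cokernel is $\mathrm{coker}(f)=\ker(f^\dagger)^\dagger$. A morphism $e$ is zero-epic if $g\circ e=0$ implies $g=0$ (equivalently $\mathrm{coker}(e)=0$), and zero-monic if $m\circ g=0$ implies $g=0$. *)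

From Stdlib Require Import ProofIrrelevance Setoid.

Record OML : Type := {
  car :> Type;
  le : car -> car -> Prop;
  meet : car -> car -> car;
  join : car -> car -> car;
  bot : car;
  top : car;
  compl : car -> car;
  le_refl : forall x, le x x;
  le_trans : forall x y z, le x y -> le y z -> le x z;
  le_antisym : forall x y, le x y -> le y x -> x = y;
  meet_glb : forall x y z, le z (meet x y) <-> (le z x /\ le z y);
  join_lub : forall x y z, le (join x y) z <-> (le x z /\ le y z);
  bot_le : forall x, le bot x;
  le_top : forall x, le x top;
  compl_inv : forall x, compl (compl x) = x;
  compl_rev : forall x y, le x y -> le (compl y) (compl x);
  meet_compl : forall x, meet x (compl x) = bot;
  join_compl : forall x, join x (compl x) = top;
  om_law : forall x y, le x y -> y = join x (meet (compl x) y)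
}.

Arguments le {_} _ _.
Arguments meet {_} _ _.
Arguments join {_} _ _.
Arguments bot {_}.
Arguments top {_}.
Arguments compl {_} _.
Arguments le_refl {_} _.
Arguments le_trans {_} _ _ _ _ _.
Arguments le_antisym {_} _ _ _ _.
Arguments meet_glb {_} _ _ _.
Arguments join_lub {_} _ _ _.
Arguments bot_le {_} _.
Arguments le_top {_} _.
Arguments compl_inv {_} _.
Arguments compl_rev {_} _ _ _.
Arguments meet_compl {_} _.
Arguments join_compl {_} _.
Arguments om_law {_} _ _ _.

Lemma meet_l (X : OML) (x y : X) : le (meet x y) x.
Proof. exact (proj1 (proj1 (meet_glb x y (meet x y)) (le_refl _))). Qed.

Lemma meet_r (X : OML) (x y : X) : le (meet x y) y.
Proof. exact (proj2 (proj1 (meet_glb x y (meet x y)) (le_refl _))). Qed.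

Lemma join_l (X : OML) (x y : X) : le x (join x y).
Proof. exact (proj1 (proj1 (join_lub x y (join x y)) (le_refl _))). Qed.

Lemma join_r (X : OML) (x y : X) : le y (join x y).
Proof. exact (proj2 (proj1 (join_lub x y (join x y)) (le_refl _))). Qed.

Lemma meet_comm (X : OML) (x y : X) : meet x y = meet y x.
Proof.
  apply le_antisym; apply meet_glb; split;
    first [apply meet_r | apply meet_l].
Qed.

Lemma le_compl_l (X : OML) (x y : X) : le (compl x) y -> le (compl y) x.
Proof. intro H. pose proof (compl_rev _ _ H) as H'. rewrite compl_inv in H'. exact H'. Qed.

Lemma compl_meet (X : OML) (x y : X) :
  compl (meet x y) = join (compl x) (compl y).
Proof.
  apply le_antisym.
  - assert (H : le (compl (join (compl x) (compl y))) (meet x y)).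
    { apply meet_glb; split; apply le_compl_l; [apply join_l | apply join_r]. }
    pose proof (compl_rev _ _ H) as H'. rewrite compl_inv in H'. exact H'.
  - apply join_lub; split; apply compl_rev; [apply meet_l | apply meet_r].
Qed.

Lemma compl_join (X : OML) (x y : X) :
  compl (join x y) = meet (compl x) (compl y).
Proof.
  rewrite <- (compl_inv (meet (compl x) (compl y))), compl_meet, !compl_inv.
  reflexivity.
Qed.

Lemma om_dual (X : OML) (u a : X) : le u a -> u = meet a (join (compl a) u).
Proof.
  intro H. pose proof (om_law _ _ (compl_rev _ _ H)) as E.
  rewrite compl_inv in E.
  rewrite <- (compl_inv u) at 1. rewrite E, compl_join, compl_meet, !compl_inv.
  reflexivity.
Qed.

Definition dcar (X : OML) (a : X) : Type := {u : X | le u a}.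

Lemma dcar_eq (X : OML) (a : X) (u v : dcar X a) :
  proj1_sig u = proj1_sig v -> u = v.
Proof.
  destruct u as [u hu], v as [v hv]; simpl; intros ->.
  f_equal; apply proof_irrelevance.
Qed.

Definition d_le (X : OML) (a : X) (u v : dcar X a) : Prop :=
  le (proj1_sig u) (proj1_sig v).
Definition d_meet (X : OML) (a : X) (u v : dcar X a) : dcar X a :=
  exist (fun w => le w a) (meet (proj1_sig u) (proj1_sig v))
        (le_trans _ _ _ (meet_l _ _ _) (proj2_sig u)).
Definition d_join (X : OML) (a : X) (u v : dcar X a) : dcar X a :=
  exist (fun w => le w a) (join (proj1_sig u) (proj1_sig v))
        (proj2 (join_lub _ _ _) (conj (proj2_sig u) (proj2_sig v))).
Definition d_bot (X : OML) (a : X) : dcar X a := exist (fun u => le u a) bot (bot_le a).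
Definition d_top (X : OML) (a : X) : dcar X a := exist (fun u => le u a) a (le_refl a).
Definition d_compl (X : OML) (a : X) (u : dcar X a) : dcar X a :=
  exist (fun w => le w a) (meet a (compl (proj1_sig u))) (meet_l _ _ _).

Lemma d_le_antisym (X : OML) (a : X) (u v : dcar X a) :
  d_le X a u v -> d_le X a v u -> u = v.
Proof. intros H1 H2; apply dcar_eq, le_antisym; assumption. Qed.

Lemma d_meet_glb (X : OML) (a : X) (x y z : dcar X a) :
  d_le X a z (d_meet X a x y) <-> (d_le X a z x /\ d_le X a z y).
Proof. apply meet_glb. Qed.

Lemma d_join_lub (X : OML) (a : X) (x y z : dcar X a) :
  d_le X a (d_join X a x y) z <-> (d_le X a x z /\ d_le X a y z).
Proof. apply join_lub. Qed.

Lemma d_compl_inv (X : OML) (a : X) (u : dcar X a) :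
  d_compl X a (d_compl X a u) = u.
Proof.
  apply dcar_eq; simpl. rewrite compl_meet, compl_inv.
  symmetry; apply om_dual, (proj2_sig u).
Qed.

Lemma d_compl_rev (X : OML) (a : X) (u v : dcar X a) :
  d_le X a u v -> d_le X a (d_compl X a v) (d_compl X a u).
Proof.
  unfold d_le; simpl; intro H. apply meet_glb; split.
  - apply meet_l.
  - eapply le_trans; [apply meet_r | apply compl_rev, H].
Qed.

Lemma d_meet_compl (X : OML) (a : X) (u : dcar X a) :
  d_meet X a u (d_compl X a u) = d_bot X a.
Proof.
  apply dcar_eq; simpl. apply le_antisym; [| apply bot_le].
  rewrite <- (meet_compl (proj1_sig u)). apply meet_glb; split.
  - apply meet_l.
  - eapply le_trans; [apply meet_r | apply meet_r].
Qed.

Lemma d_join_compl (X : OML) (a : X) (u : dcar X a) :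
  d_join X a u (d_compl X a u) = d_top X a.
Proof.
  apply dcar_eq; simpl. rewrite meet_comm.
  symmetry; apply om_law, (proj2_sig u).
Qed.

Lemma d_om_law (X : OML) (a : X) (u v : dcar X a) :
  d_le X a u v -> v = d_join X a u (d_meet X a (d_compl X a u) v).
Proof.
  unfold d_le; intro H. apply dcar_eq; simpl.
  assert (E : meet (meet a (compl (proj1_sig u))) (proj1_sig v)
              = meet (compl (proj1_sig u)) (proj1_sig v)).
  { apply le_antisym; apply meet_glb; split.
    - eapply le_trans; [apply meet_l | apply meet_r].
    - apply meet_r.
    - apply meet_glb; split; [eapply le_trans; [apply meet_r | apply (proj2_sig v)] | apply meet_l].
    - apply meet_r. }
  rewrite E. apply om_law, H.
Qed.

Definition down (X : OML) (a : X) : OML := {|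
  car := dcar X a;
  le := d_le X a;
  meet := d_meet X a;
  join := d_join X a;
  bot := d_bot X a;
  top := d_top X a;
  compl := d_compl X a;
  le_refl := fun u => le_refl (proj1_sig u);
  le_trans := fun u v w => le_trans (proj1_sig u) (proj1_sig v) (proj1_sig w);
  le_antisym := d_le_antisym X a;
  meet_glb := d_meet_glb X a;
  join_lub := d_join_lub X a;
  bot_le := fun u => bot_le (proj1_sig u);
  le_top := fun u => proj2_sig u;
  compl_inv := d_compl_inv X a;
  compl_rev := d_compl_rev X a;
  meet_compl := d_meet_compl X a;
  join_compl := d_join_compl X a;
  om_law := d_om_law X a
|}.

Definition unitOML : OML := {|
  car := unit;
  le := fun _ _ => True;
  meet := fun _ _ => tt;
  join := fun _ _ => tt;
  bot := tt;
  top := tt;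
  compl := fun _ => tt;
  le_refl := fun _ => I;
  le_trans := fun _ _ _ _ _ => I;
  le_antisym := fun x y _ _ => match x, y with tt, tt => eq_refl end;
  meet_glb := fun _ _ _ => conj (fun _ => conj I I) (fun _ => I);
  join_lub := fun _ _ _ => conj (fun _ => conj I I) (fun _ => I);
  bot_le := fun _ => I;
  le_top := fun _ => I;
  compl_inv := fun x => match x with tt => eq_refl end;
  compl_rev := fun _ _ _ => I;
  meet_compl := fun _ => eq_refl;
  join_compl := fun _ => eq_refl;
  om_law := fun x y _ => match y with tt => eq_refl end
|}.

(** We represent candidate pairs by [mor X Y]
    and the morphism condition by [is_mor]. *)

Record mor (X Y : OML) : Type := Mor {
  lower : X -> Y;
  upper : Y -> X
}.
Arguments Mor {X Y} _ _.
Arguments lower {X Y} _ _.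
Arguments upper {X Y} _ _.

Definition is_mor {X Y : OML} (f : mor X Y) : Prop :=
  (forall x x' : X, le x x' -> le (lower f x') (lower f x)) /\
  (forall y y' : Y, le y y' -> le (upper f y') (upper f y)) /\
  (forall (x : X) (y : Y), le y (lower f x) <-> le x (upper f y)).

Definition meq {X Y : OML} (f g : mor X Y) : Prop :=
  (forall x, lower f x = lower g x) /\ (forall y, upper f y = upper g y).

Definition id_mor (X : OML) : mor X X := Mor (fun x => compl x) (fun x => compl x).

Definition comp {X Y Z : OML} (g : mor Y Z) (f : mor X Y) : mor X Z :=
  Mor (fun x => lower g (compl (lower f x)))
      (fun z => upper f (compl (upper g z))).

Definition dagger {X Y : OML} (f : mor X Y) : mor Y X :=
  Mor (upper f) (lower f).

Definition to_zero (X : OML) : mor X unitOML := Mor (Y := unitOML) (fun _ => tt) (fun _ => top).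
Definition from_zero (Y : OML) : mor unitOML Y := Mor (X := unitOML) (fun _ => top) (fun _ => tt).
Definition zero_mor (X Y : OML) : mor X Y := comp (from_zero Y) (to_zero X).

Definition down_mor (X : OML) (a : X) : mor (down X a) X :=
  Mor (X := down X a) (fun u : dcar X a => compl (proj1_sig u))
      (fun x => exist (fun u => le u a) (meet a (compl x)) (meet_l _ _ _)).

Definition ker {X Y : OML} (f : mor X Y) : mor (down X (upper f top)) X :=
  down_mor X (upper f top).
Definition coker {X Y : OML} (f : mor X Y) := dagger (ker (dagger f)).

Definition zero_epic {X Y : OML} (e : mor X Y) : Prop :=
  forall (Z : OML) (g : mor Y Z), is_mor g ->
    meq (comp g e) (zero_mor X Z) -> meq g (zero_mor Y Z).

Definition zero_monic {X Y : OML} (m : mor X Y) : Prop :=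
  forall (W : OML) (g : mor W X), is_mor g ->
    meq (comp m g) (zero_mor W Y) -> meq g (zero_mor W X).

Definition img_mor {X Y : OML} (f : mor X Y) : mor (down Y (compl (lower f top))) Y :=
  Mor (X := down Y (compl (lower f top))) (fun v : dcar Y (compl (lower f top)) => compl (proj1_sig v))
      (fun y => exist (fun u => le u (compl (lower f top)))
                      (meet (compl y) (compl (lower f top))) (meet_r _ _ _)).

Definition epi_mor {X Y : OML} (f : mor X Y) : mor X (down Y (compl (lower f top))) :=
  Mor (Y := down Y (compl (lower f top))) (fun x => exist (fun u => le u (compl (lower f top)))
                      (meet (lower f x) (compl (lower f top))) (meet_r _ _ _))
      (fun v : dcar Y (compl (lower f top)) => upper f (proj1_sig v)).

Definition mid_mor {X Y : OML} (f : mor X Y) :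
  mor (down X (compl (upper f top))) (down Y (compl (lower f top))) :=
  Mor (X := down X (compl (upper f top))) (Y := down Y (compl (lower f top)))
      (fun x : dcar X (compl (upper f top)) => exist (fun u => le u (compl (lower f top)))
                      (meet (lower f (proj1_sig x)) (compl (lower f top))) (meet_r _ _ _))
      (fun v : dcar Y (compl (lower f top)) => exist (fun u => le u (compl (upper f top)))
                      (meet (upper f (proj1_sig v)) (compl (upper f top))) (meet_r _ _ _)).


(* The proof rests on three general observations.
   1. Morphisms (Galois connections of antitone maps) are closed under
      composition and dagger, and f_* turns joins into meets with
      f_*(f^*(1)) = 1.  Consequently f_* and f^* do not see the part of
      their argument lying under f^*(1), resp. f_*(1).
   2. A morphism e with e_*(1) = 0 is zero-epic, and dually a morphism m
      with m^*(1) = 0 is zero-monic.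
   3. Up to extensional equality, e_f = (i_f)† ∘ f and
      m_f = (i_f)† ∘ f ∘ i_{f†}; hence both are morphisms by (1).
   The image i_f is literally the downset morphism ker(coker f).  The
   factorisations i_f ∘ e_f = f and m_f ∘ (i_{f†})† = e_f are orthomodular
   computations based on (1), and the zero-epi/monicity statements follow
   from (2) since e_f and m_f send 1 to f_*(1) ∧ f_*(1)^⊥ = 0. *)

Lemma join_comm (X : OML) (x y : X) : join x y = join y x.
Proof. apply le_antisym; apply join_lub; split; first [apply join_r | apply join_l]. Qed.

Lemma le_compl_r (X : OML) (x y : X) : le x (compl y) -> le y (compl x).
Proof. intro H. rewrite <- (compl_inv y). apply compl_rev, H. Qed.

Lemma meet_top_l (X : OML) (x : X) : meet top x = x.
Proof.
  apply le_antisym; [apply meet_r |].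
  apply meet_glb; split; [apply le_top | apply le_refl].
Qed.

Lemma compl_bot (X : OML) : compl (@bot X) = top.
Proof.
  apply le_antisym; [apply le_top |].
  rewrite <- (join_compl (@bot X)). apply join_lub; split; [apply bot_le | apply le_refl].
Qed.

Lemma top_of_compl_le_bot (X : OML) (x : X) : le (compl x) bot -> x = top.
Proof.
  intro H. apply le_antisym; [apply le_top |].
  rewrite <- compl_bot. apply le_compl_l, H.
Qed.

(* The outer complement of a relative complement in ↓b, for elements above b^⊥:
   orthomodularity gives back the element. *)
Lemma compl_relcompl (X : OML) (b w : X) :
  le (compl b) w -> compl (meet b (compl (meet w b))) = w.
Proof.
  intro H. rewrite compl_meet, compl_inv, meet_comm.
  rewrite <- (compl_inv b) at 2. symmetry. apply om_law, H.
Qed.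

Lemma is_mor_dagger {X Y : OML} (f : mor X Y) : is_mor f -> is_mor (dagger f).
Proof.
  intros [h1 [h2 h3]]. split; [exact h2 | split; [exact h1 |]].
  intros y x; simpl. symmetry. apply h3.
Qed.

Section Galois.
Context {X Y : OML} (f : mor X Y) (hf : is_mor f).

Lemma lower_antitone (x x' : X) : le x x' -> le (lower f x') (lower f x).
Proof. exact (proj1 hf x x'). Qed.

Lemma galois (x : X) (y : Y) : le y (lower f x) <-> le x (upper f y).
Proof. exact (proj2 (proj2 hf) x y). Qed.

(* f_* is a right adjoint (up to reversal), so it turns joins into meets. *)
Lemma lower_join (x y : X) : lower f (join x y) = meet (lower f x) (lower f y).
Proof.
  apply le_antisym.
  - apply meet_glb; split; apply lower_antitone; [apply join_l | apply join_r].
  - apply galois, join_lub; split; apply galois; [apply meet_l | apply meet_r].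
Qed.

Lemma lower_upper_top : lower f (upper f top) = top.
Proof. apply le_antisym; [apply le_top |]. apply galois, le_refl. Qed.

Lemma lower_top_le (x : X) : le (lower f top) (lower f x).
Proof. apply lower_antitone, le_top. Qed.

Lemma lower_join_upper_top (x : X) : lower f (join x (upper f top)) = lower f x.
Proof. rewrite lower_join, lower_upper_top, meet_comm. apply meet_top_l. Qed.

Lemma lower_support : lower f (compl (upper f top)) = lower f top.
Proof. rewrite <- (join_compl (upper f top)), join_comm.
  symmetry. apply lower_join_upper_top.
Qed.

(* Projecting x into ↓(f^*(1)^⊥) (the image of (i_{f†})†) does not change f_*. *)
Lemma lower_relcompl (x : X) :
  lower f (meet (compl (upper f top)) (compl (meet (compl x) (compl (upper f top)))))
  = lower f x.
Proof.
  rewrite compl_meet, !compl_inv.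
  transitivity (lower f (join x (upper f top))); [| apply lower_join_upper_top].
  rewrite <- lower_join_upper_top, (join_comm _ (meet _ _)). f_equal.
  symmetry. apply om_law, join_r.
Qed.

Lemma lower_top_of_upper_top : (forall y, upper f y = top) -> forall x, lower f x = top.
Proof. intros H x. apply le_antisym; [apply le_top |]. apply galois. rewrite H. apply le_top. Qed.

End Galois.

Section GaloisDual.
Context {X Y : OML} (f : mor X Y) (hf : is_mor f).

Lemma upper_top_le (y : Y) : le (upper f top) (upper f y).
Proof. exact (lower_top_le (dagger f) (is_mor_dagger f hf) y). Qed.

Lemma upper_support : upper f (compl (lower f top)) = upper f top.
Proof. exact (lower_support (dagger f) (is_mor_dagger f hf)). Qed.

Lemma upper_relcompl (y : Y) :
  upper f (meet (compl (lower f top)) (compl (meet (compl y) (compl (lower f top)))))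
  = upper f y.
Proof. exact (lower_relcompl (dagger f) (is_mor_dagger f hf) y). Qed.

Lemma upper_top_of_lower_top : (forall x, lower f x = top) -> forall y, upper f y = top.
Proof. exact (lower_top_of_upper_top (dagger f) (is_mor_dagger f hf)). Qed.

End GaloisDual.

Lemma is_mor_comp {X Y Z : OML} (g : mor Y Z) (f : mor X Y) :
  is_mor f -> is_mor g -> is_mor (comp g f).
Proof.
  intros [f1 [f2 f3]] [g1 [g2 g3]]. split; [| split]; simpl.
  - intros x x' h. apply g1, compl_rev, f1, h.
  - intros z z' h. apply f2, compl_rev, g2, h.
  - intros x z. rewrite g3, <- f3. split; apply le_compl_l.
Qed.

Lemma down_mor_is_mor (X : OML) (a : X) : is_mor (down_mor X a).
Proof.
  split; [| split].
  - intros x x' h. apply compl_rev, h.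
  - intros y y' h. unfold le; simpl; unfold d_le; simpl.
    apply meet_glb; split; [apply meet_l |].
    eapply le_trans; [apply meet_r | apply compl_rev, h].
  - intros [u hu] y. unfold le; simpl; unfold d_le; simpl. split; intro h.
    + apply meet_glb; split; [exact hu |]. apply le_compl_r, h.
    + apply le_compl_r. eapply le_trans; [exact h | apply meet_r].
Qed.

Lemma meq_trans {X Y : OML} (f g h : mor X Y) : meq f g -> meq g h -> meq f h.
Proof. intros [a b] [c d]; split; intros; congruence. Qed.

Lemma meq_comp_r {X Y Z : OML} (h : mor Y Z) (g g' : mor X Y) :
  meq g g' -> meq (comp h g) (comp h g').
Proof. intros [a b]; split; intro; simpl; congruence. Qed.

Lemma meq_is_mor {X Y : OML} (f g : mor X Y) : meq f g -> is_mor f -> is_mor g.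
Proof.
  intros [E1 E2] [h1 [h2 h3]]. split; [| split].
  - intros x x' h. rewrite <- !E1. apply h1, h.
  - intros y y' h. rewrite <- !E2. apply h2, h.
  - intros x y. rewrite <- E1, <- E2. apply h3.
Qed.

Lemma zero_of_upper_top {X Y : OML} (g : mor X Y) (hg : is_mor g) :
  (forall y, upper g y = top) -> meq g (zero_mor X Y).
Proof. intro H. split; intro; [apply (lower_top_of_upper_top g hg H) | apply H]. Qed.

Lemma zero_of_lower_top {X Y : OML} (g : mor X Y) (hg : is_mor g) :
  (forall x, lower g x = top) -> meq g (zero_mor X Y).
Proof. intro H. split; intro; [apply H | apply (upper_top_of_lower_top g hg H)]. Qed.

(* If e_*(1) = 0 then g ∘ e = 0 forces g^*(z)^⊥ ≤ e_*(1) = 0 for all z. *)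
Lemma zero_epic_of_lower_top {X Y : OML} (e : mor X Y) (he : is_mor e) :
  lower e top = bot -> zero_epic e.
Proof.
  intros E Z g hg [_ H]. apply (zero_of_upper_top g hg). intro z.
  apply top_of_compl_le_bot. rewrite <- E.
  apply (galois e he). specialize (H z). simpl in H. rewrite H. apply le_top.
Qed.

Lemma zero_monic_of_upper_top {X Y : OML} (m : mor X Y) (hm : is_mor m) :
  upper m top = bot -> zero_monic m.
Proof.
  intros E W g hg [H _]. apply (zero_of_lower_top g hg). intro w.
  apply top_of_compl_le_bot. rewrite <- E.
  apply (galois m hm). specialize (H w). simpl in H. rewrite H. apply le_top.
Qed.

Lemma ker_coker_img {X Y : OML} (f : mor X Y) : meq (ker (coker f)) (img_mor f).
Proof. split; intro y; [reflexivity | apply dcar_eq, meet_comm]. Qed.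

Lemma img_is_mor {X Y : OML} (f : mor X Y) : is_mor (img_mor f).
Proof. apply (meq_is_mor _ _ (ker_coker_img f)), down_mor_is_mor. Qed.

Section Factorisation.
Context {X Y : OML} (f : mor X Y) (hf : is_mor f).

Lemma epi_as_comp : meq (comp (dagger (img_mor f)) f) (epi_mor f).
Proof.
  split; intro; [apply dcar_eq |]; simpl; rewrite compl_inv; reflexivity.
Qed.

Lemma epi_is_mor : is_mor (epi_mor f).
Proof.
  apply (meq_is_mor _ _ epi_as_comp), is_mor_comp;
    [exact hf | apply is_mor_dagger, img_is_mor].
Qed.

Lemma img_epi : meq (comp (img_mor f) (epi_mor f)) f.
Proof.
  split.
  - intro x. apply compl_relcompl. rewrite compl_inv. apply (lower_top_le f hf).
  - intros y. apply (upper_relcompl f hf).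
Qed.

Lemma epi_zero_epic : zero_epic (epi_mor f).
Proof.
  apply (zero_epic_of_lower_top _ epi_is_mor), dcar_eq, meet_compl.
Qed.

Lemma mid_as_comp :
  meq (comp (dagger (img_mor f)) (comp f (img_mor (dagger f)))) (mid_mor f).
Proof.
  split; intro; apply dcar_eq; simpl; rewrite !compl_inv; reflexivity.
Qed.

Lemma mid_is_mor : is_mor (mid_mor f).
Proof.
  apply (meq_is_mor _ _ mid_as_comp).
  apply is_mor_comp; [apply is_mor_comp |]; auto using img_is_mor, is_mor_dagger.
Qed.

Lemma mid_zero_epic : zero_epic (mid_mor f).
Proof.
  apply (zero_epic_of_lower_top _ mid_is_mor), dcar_eq; simpl.
  rewrite (lower_support f hf). apply meet_compl.
Qed.

Lemma mid_zero_monic : zero_monic (mid_mor f).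
Proof.
  apply (zero_monic_of_upper_top _ mid_is_mor), dcar_eq; simpl.
  rewrite (upper_support f hf). apply meet_compl.
Qed.

Lemma mid_factor : meq (comp (mid_mor f) (dagger (img_mor (dagger f)))) (epi_mor f).
Proof.
  split.
  - intro x. apply dcar_eq; simpl. f_equal. apply (lower_relcompl f hf).
  - intro v. simpl. apply compl_relcompl. rewrite compl_inv. apply (upper_top_le f hf).
Qed.

End Factorisation.

Theorem mainTheorem5 (X Y : OML) (f : mor X Y) (hf : is_mor f) :
  (* (i) Im(f) = ker(coker f) is i_f : ↓(f_*(1)^perp) -> Y *)
  (is_mor (img_mor f) /\ meq (ker (coker f)) (img_mor f)) /\
  (* (ii) e_f is a morphism, i_f ∘ e_f = f, and e_f is zero-epic *)
  (is_mor (epi_mor f) /\ meq (comp (img_mor f) (epi_mor f)) f /\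
   zero_epic (epi_mor f)) /\
  (* (iii) m_f is a zero-epic and zero-monic morphism with
     m_f ∘ (i_{f†})† = e_f, hence f = i_f ∘ m_f ∘ (i_{f†})† *)
  (is_mor (mid_mor f) /\ zero_epic (mid_mor f) /\ zero_monic (mid_mor f) /\
   meq (comp (mid_mor f) (dagger (img_mor (dagger f)))) (epi_mor f) /\
   meq (comp (img_mor f) (comp (mid_mor f) (dagger (img_mor (dagger f))))) f).
Proof.
  split; [exact (conj (img_is_mor f) (ker_coker_img f)) |].
  split; [exact (conj (epi_is_mor f hf) (conj (img_epi f hf) (epi_zero_epic f hf))) |].
  split; [exact (mid_is_mor f hf) |].
  split; [exact (mid_zero_epic f hf) |].
  split; [exact (mid_zero_monic f hf) |].
  split; [exact (mid_factor f hf) |].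
  apply (meq_trans _ (comp (img_mor f) (epi_mor f)));
    [apply meq_comp_r, (mid_factor f hf) | apply (img_epi f hf)].
Qed.
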